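(* A PMD $M^Q(a|x)$ on $\mathcal{H}^Q$ with program set $\mathcal{X}$ and outcome set $\mathcal{A}$ is incompatible (i.e. not simple) if and only if there exists a family $\{\rho^Q_{x,a}: x\in\mathcal{X}, a\in\mathcal{A}\}$ of positive semidefinite operators on $\mathcal{H}^Q$ with $\sum_{x,a}\mathrm{Tr}[\rho^Q_{x,a}]=1$ such that \[\sum_{a,x}\mathrm{Tr}\big[M^Q(a|x)\,\rho^Q_{x,a}\big]>P^{\mathrm{simple}}_{\mathrm{guess}}(\rho^Q_{x,a}),\] where $P^{\mathrm{simple}}_{\mathrm{guess}}(\rho^Q_{x,a})$ is the optimum guessing probability achievable with simple PMDs.
   Context: All Hilbert spaces are finite-dimensional and all alphabets are finite. A PMD on $\mathcal{H}^Q$ with program set $\mathcal{X}$ and outcome set $\mathcal{A}$ is a family $\{M^Q(a|x)\}$ of operators with $M^Q(a|x)\ge0$ and $\sum_a M^Q(a|x)=\mathbb{1}^Q$ for every $x$. It is simple if $M^Q(a|x)=\sum_i p(a|i,x)\tilde M^Q(i)$ for some POVM $\{\tilde M^Q(i)\}$ and conditional distribution $p(a|i,x)$; otherwise it is incompatible. For a guessing game with post-information, i.e. a family $\{\rho^R_{w,z}\}$ of positive semidefinite operators on $\mathcal{H}^R$ with total trace $1$, and a PMD $N^{Q''}(c|v)$, the optimal guessing probability is \[P_{\mathrm{guess}}(N^{Q''}(c|v);\rho^R_{w,z}):=\max\sum_{w,z}\sum_r\sum_{i,v,c}\mu(r)\,q(z|c,w,i,r)\,p(v|w,i,r)\,\mathrm{Tr}\big[\mathcal{E}^{R\to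 Q''}_{i|r}(\rho^R_{w,z})\,N^{Q''}(c|v)\big],\] maximized over probability distributions $\mu(r)$, quantum instruments $\{\mathcal{E}^{R\to Q''}_{i|r}\}_i$ and conditional distributions $p(v|w,i,r)$, $q(z|c,w,i,r)$. $P^{\mathrm{simple}}_{\mathrm{guess}}(\rho^R_{w,z})$ denotes the maximum of $P_{\mathrm{guess}}(N;\rho^R_{w,z})$ over all simple PMDs $N$ (this value is the same for every simple PMD). In the claim, the game is $\{\rho^Q_{x,a}\}$ with post-information $w=x$ and guessed label $z=a$. *)

From HB Require Import structures.
From mathcomp Require Import all_boot all_order all_algebra.
From mathcomp Require Import classical_sets reals.
From mathcomp.real_closed Require Import complex mxtens.

Set Implicit Arguments.
Unset Strict Implicit.
Unset Printing Implicit Defensive.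

Import Order.TTheory GRing.Theory Num.Theory.
Local Open Scope ring_scope.

Section QuantumDefs.

Variable R : realType.
Local Notation C := (R[i]).

Definition RtoC (r : R) : C := (r%:C)%C.

Definition adj m n (A : 'M[C]_(m, n)) : 'M[C]_(n, m) :=
  map_mx (fun z => z^*) A^T.

(* positive semidefinite operator on C^n: <v, A v> >= 0 for all v
   (in the order of C, "0 <= z" means z is a nonnegative real) *)
Definition psd n (A : 'M[C]_n) : Prop :=
  forall v : 'cV[C]_n, 0 <= (adj v *m A *m v) 0 0.

Definition distr (T : finType) (mu : T -> R) : Prop :=
  (forall t, 0 <= mu t) /\ \sum_t mu t = 1.

Definition cond_distr (Cd Y : finType) (p : Cd -> Y -> R) : Prop :=
  forall c, distr (p c).

(* PMD with program set X and outcome set A on C^n;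
   M x a stands for M(a|x) *)
Definition is_PMD n (X A : finType) (M : X -> A -> 'M[C]_n) : Prop :=
  (forall x a, psd (M x a)) /\ (forall x, \sum_a M x a = 1%:M).

Definition is_POVM n (I : finType) (M : I -> 'M[C]_n) : Prop :=
  (forall i, psd (M i)) /\ \sum_i M i = 1%:M.

Definition simple_PMD n (X A : finType) (M : X -> A -> 'M[C]_n) : Prop :=
  is_PMD M /\
  exists (I : finType) (Mt : I -> 'M[C]_n) (p : (I * X)%type -> A -> R),
    is_POVM Mt /\ cond_distr p /\
    forall x a, M x a = \sum_i RtoC (p (i, x) a) *: Mt i.

Definition incompatible_PMD n (X A : finType) (M : X -> A -> 'M[C]_n) : Prop :=
  is_PMD M /\ ~ simple_PMD M.

(* the (i,j) block (of size m x m) of a (k*m) x (k*m) matrix,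
   w.r.t. the decomposition C^k (x) C^m (index convention of mxtens) *)
Definition blockmx k m (Y : 'M[C]_(k * m)) (i j : 'I_k) : 'M[C]_m :=
  \matrix_(a < m, b < m) Y (mxtens_index (i, a)) (mxtens_index (j, b)).

Definition ampliation k m n (Phi : 'M[C]_m -> 'M[C]_n) (Y : 'M[C]_(k * m))
  : 'M[C]_(k * n) :=
  \sum_(i < k) \sum_(j < k) (delta_mx i j : 'M[C]_k) *t Phi (blockmx Y i j).

Definition is_CP m n (Phi : 'M[C]_m -> 'M[C]_n) : Prop :=
  linear Phi /\
  forall (k : nat) (Y : 'M[C]_(k * m)), psd Y -> psd (ampliation Phi Y).

Definition is_instrument m n (I : finType) (E : I -> 'M[C]_m -> 'M[C]_n)
  : Prop :=
  (forall i, is_CP (E i)) /\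
  forall rho : 'M[C]_m, \tr (\sum_i E i rho) = \tr rho.

Definition is_game m (W Z : finType) (rho : W -> Z -> 'M[C]_m) : Prop :=
  (forall w z, psd (rho w z)) /\ \sum_w \sum_z \tr (rho w z) = 1.

(* success probability of a given strategy (mu, E, p, q) for the PMD
   N (N v c stands for N(c|v)) on the game rho *)
Definition guess_value m n (W Z V Cc : finType)
  (N : V -> Cc -> 'M[C]_n) (rho : W -> Z -> 'M[C]_m)
  (Rr I : finType) (mu : Rr -> R) (E : Rr -> I -> 'M[C]_m -> 'M[C]_n)
  (p : (W * I * Rr)%type -> V -> R) (q : (Cc * W * I * Rr)%type -> Z -> R)
  : C :=
  \sum_w \sum_z \sum_r \sum_i \sum_v \sum_c
     RtoC (mu r * q (c, w, i, r) z * p (w, i, r) v)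
     * \tr (E r i (rho w z) *m N v c).

Definition P_guess m n (W Z V Cc : finType)
  (N : V -> Cc -> 'M[C]_n) (rho : W -> Z -> 'M[C]_m) : R :=
  sup (fun t : R =>
    exists (Rr I : finType) (mu : Rr -> R)
           (E : Rr -> I -> 'M[C]_m -> 'M[C]_n)
           (p : (W * I * Rr)%type -> V -> R)
           (q : (Cc * W * I * Rr)%type -> Z -> R),
      distr mu /\ (forall r, is_instrument (E r)) /\
      cond_distr p /\ cond_distr q /\
      RtoC t = guess_value N rho mu E p q).

Definition P_guess_simple m (W Z : finType) (rho : W -> Z -> 'M[C]_m) : R :=
  sup (fun t : R =>
    exists (n : nat) (V Cc : finType) (N : V -> Cc -> 'M[C]_n),
      simple_PMD N /\ t = P_guess N rho).

End QuantumDefs.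

(* A simple PMD is the same thing as a POVM G indexed by the deterministic
   response functions l : X -> A, read as M(a|x) = sum_(l x = a) G(l); hence the
   simple PMDs on C^n form a compact convex set.  A strategy in a guessing game
   played with a simple PMD can be absorbed into a simple PMD F(z|w) measured
   directly on the states: pull the instruments back to the Heisenberg picture
   and compose the classical post-processings.  So P^simple_guess(rho) is the
   supremum over simple F of sum Tr[F(z|w) rho_(w,z)], and a simple M never beats
   it.  Conversely, if M is not simple, let Y be the simple PMD nearest to M in
   Hilbert-Schmidt distance: D = M - Y is a nonzero Hermitian family with
   Re<D, F - Y> <= 0 for every simple F.  Shifting D by a multiple of the identity
   and normalising gives a game on which the value of any PMD F is an increasing
   affine function of Re<D, F>, and M strictly beats every simple PMD there. *)

From HB Require Import structures.
From mathcomp Require Import all_boot all_order all_algebra.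
From mathcomp Require Import classical_sets reals.
From mathcomp.real_closed Require Import complex mxtens.
From mathcomp Require Import boolp sesquilinear spectral ring lra.
From mathcomp Require Import topology normedtype derive.
Import Order.TTheory GRing.Theory Num.Theory Num.Def.
Import numFieldNormedType.Exports.
Local Open Scope ring_scope.

Set Implicit Arguments.
Unset Strict Implicit.
Unset Printing Implicit Defensive.

(** * Positive semidefinite matrices *)

(* The hypotheses are the values at u, v, u + v and u + 'i v of a sesquilinear
   form f, expanded with a = f(u, v) and b = f(v, u). *)
Lemma conj_polarization (C : numClosedFieldType) (uu vv a b : C) :
  uu \is Num.real -> vv \is Num.real ->
  uu + a + (b + vv) \is Num.real ->
  uu + - 'i * a + ('i * b + 'i * (- 'i * vv)) \is Num.real -> b = a^*.
Proof.
move=> ru rv r1 r2.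
have ii : 'i * - 'i = 1 :> C by rewrite mulrN -expr2 sqrCi opprK.
have /eqP e1 : (a + b)^* == a + b.
  rewrite -CrealE (_ : a + b = uu + a + (b + vv) - uu - vv); last by ring.
  by rewrite !rpredB.
have /eqP e2 : ('i * (b - a))^* == 'i * (b - a).
  rewrite -CrealE (_ : 'i * (b - a) =
    uu + - 'i * a + ('i * b + 'i * (- 'i * vv)) - uu - vv).
    by rewrite !rpredB.
  by rewrite mulrA ii; ring.
move: e1 e2; rewrite rmorphM rmorphB rmorphD /= conjCi => e1 e2.
have e3 : a^* - b^* = b - a.
  by apply: (mulfI (neq0Ci C)); rewrite -e2; ring.
have two_neq0 : (2 : C) != 0 by rewrite pnatr_eq0.
apply: (mulfI two_neq0); transitivity ((a + b) + (b - a)); first by ring.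
by rewrite -e1 -e3; ring.
Qed.

Lemma mul_norm_le_sum (K : numDomainType) n (u : 'rV[K]_n) i j :
  `|u 0 i| * `|u 0 j| <= \sum_k `|u 0 k| ^+ 2.
Proof.
have le_sum k : `|u 0 k| ^+ 2 <= \sum_k `|u 0 k| ^+ 2.
  by rewrite (bigD1 k) //= lerDl sumr_ge0 // => l _; rewrite exprn_ge0.
have /orP[le_ij|le_ji] := ger_leVge (normr_ge0 (u 0 i)) (normr_ge0 (u 0 j)).
  by apply: le_trans (le_sum j); rewrite expr2 ler_wpM2r.
by apply: le_trans (le_sum i); rewrite expr2 ler_wpM2l.
Qed.

Section PositiveMatrices.
Variable R : realType.
Local Notation C := R[i].
Local Notation sform A := (form conjC A).

Lemma adj_trmxC m n (A : 'M[C]_(m, n)) : adj A = (A ^t*)%sesqui.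
Proof. by []. Qed.

Lemma adjE m n (A : 'M[C]_(m, n)) i j : adj A i j = (A j i)^*.
Proof. by rewrite !mxE. Qed.

Lemma adjK m n (A : 'M[C]_(m, n)) : adj (adj A) = A.
Proof. by rewrite !adj_trmxC trmxCK. Qed.

Lemma adjM m n p (A : 'M[C]_(m, n)) (B : 'M[C]_(n, p)) :
  adj (A *m B) = adj B *m adj A.
Proof. by rewrite !adj_trmxC trmx_mul map_mxM. Qed.

Lemma adjB m n (A B : 'M[C]_(m, n)) : adj (A - B) = adj A - adj B.
Proof. by rewrite !adj_trmxC linearB /= map_mxB. Qed.

Lemma mxtrace_adj n (A : 'M[C]_n) : \tr (adj A) = (\tr A)^*.
Proof. by rewrite rmorph_sum; apply: eq_bigr => i _; rewrite !mxE. Qed.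

Lemma psdE n (A : 'M[C]_n) : psd A <-> forall u : 'rV[C]_n, 0 <= sform A u u.
Proof.
split=> hA u; first by have := hA (adj u); rewrite /form -adj_trmxC adjK.
by have := hA (adj u); rewrite /form -adj_trmxC adjK.
Qed.

(* [formZr] states this with the conjugation as a bundled morphism, on which
   [conjCi] cannot rewrite. *)
Lemma sformZr n (A : 'M[C]_n) c u v : sform A u (c *: v) = c^* * sform A u v.
Proof. exact: formZr. Qed.

Lemma conj_form n (A : 'M[C]_n) u v : (sform A u v)^* = sform (adj A) v u.
Proof.
rewrite /form -!adj_trmxC.
have -> (B : 'M[C]_1) : (B 0 0)^* = adj B 0 0 by rewrite !mxE.
by rewrite !adjM adjK mulmxA.
Qed.

Lemma psd_hermitian n (A : 'M[C]_n) : psd A -> adj A = A.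
Proof.
move=> /psdE hA; have real_form u : sform A u u \is Num.real by exact: ger0_real.
have hermA u v : sform A v u = (sform A u v)^*.
  apply: conj_polarization (real_form u) (real_form v) _ _.
    by have := real_form (u + v); rewrite !formDl !formDr addrA.
  have := real_form (u + 'i *: v).
  by rewrite !formDl !formDr !formZl !sformZr conjCi addrA.
apply/matrixP => i j; rewrite !mxE -(formee conjC A i j) -(formee conjC A j i).
by rewrite hermA conjCK.
Qed.

Lemma form_row n (B U : 'M[C]_n) k :
  sform B (row k U) (row k U) = (U *m B *m adj U) k k.
Proof.
rewrite /form !mxE; apply: eq_bigr => j _; rewrite !mxE; congr (_ * _).
by apply: eq_bigr => l _; rewrite !mxE.
Qed.

Lemma mxtrace_mul_psd_ge0 n (P N : 'M[C]_n) : psd P -> psd N -> 0 <= \tr (P *m N).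
Proof.
move=> /psdE hP hN; set U := spectralmx N; set d := spectral_diag N.
have normalN : N \is normalmx.
  by apply/normalmxP; rewrite -!adj_trmxC psd_hermitian.
have unitaryU : U *m adj U = 1%:M by apply/unitarymxP/spectral_unitarymx.
have eN : N = adj U *m diag_mx d *m U.
  by rewrite adj_trmxC -invmx_unitary ?spectral_unitarymx //; apply/orthomx_spectralP.
have d_ge0 k : 0 <= d 0 k.
  have -> : d 0 k = (U *m N *m adj U) k k.
    rewrite eN !mulmxA unitaryU mul1mx -!mulmxA unitaryU mulmx1.
    by rewrite mxE eqxx mulr1n.
  by rewrite -form_row; move/psdE: hN; apply.
rewrite eN !mulmxA mxtrace_mulC !mulmxA /mxtrace; apply: sumr_ge0 => k _.
by rewrite mul_mx_diag mxE -form_row mulr_ge0.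
Qed.

Lemma psd0 n : psd (0 : 'M[C]_n).
Proof. by move=> v; rewrite mulmx0 mul0mx mxE. Qed.

Lemma psdD n (A B : 'M[C]_n) : psd A -> psd B -> psd (A + B).
Proof. by move=> hA hB v; rewrite mulmxDr mulmxDl mxE addr_ge0. Qed.

Lemma psdZ n c (A : 'M[C]_n) : 0 <= c -> psd A -> psd (c *: A).
Proof. by move=> hc hA v; rewrite -scalemxAr -scalemxAl mxE mulr_ge0. Qed.

Lemma psd_sum n (I : finType) (P : pred I) (F : I -> 'M[C]_n) :
  (forall i, P i -> psd (F i)) -> psd (\sum_(i | P i) F i).
Proof. by apply: (big_ind (fun B => psd B)); [apply: psd0 | apply: psdD]. Qed.

Lemma psd1 n : psd (1%:M : 'M[C]_n).
Proof.
move=> v; rewrite mulmx1 mxE; apply: sumr_ge0 => i _.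
by rewrite adjE mulrC mul_conjC_ge0.
Qed.

Lemma psd_rank1 n (v : 'cV[C]_n) : psd (v *m adj v).
Proof.
move=> u; rewrite mulmxA -mulmxA mxE big_ord1.
have -> : adj u *m v = adj (adj v *m u) by rewrite adjM adjK.
by rewrite adjE mulrC mul_conjC_ge0.
Qed.

Lemma psd_mxtrace_ge0 n (P : 'M[C]_n) : psd P -> 0 <= \tr P.
Proof. by move=> hP; rewrite -[P]mulmx1 mxtrace_mul_psd_ge0 //; apply: psd1. Qed.

Lemma psd_diag_ge0 n (P : 'M[C]_n) i : psd P -> 0 <= P i i.
Proof. by move=> /psdE hP; rewrite -(formee conjC P i i). Qed.

Lemma psd_offdiag n (P : 'M[C]_n) i j : psd P -> `|P i j| *+ 2 <= P i i + P j j.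
Proof.
move=> hP; have Pji : P j i = (P i j)^* by rewrite -{1}(psd_hermitian hP) adjE.
have /psdE := hP => /(_ (`|P i j| *: 'e_i + (- P i j) *: 'e_j)).
rewrite !formDl !formDr !formZl !sformZr !(formee conjC) Pji conj_normC rmorphN /=.
move: (psd_diag_ge0 i hP) (psd_diag_ge0 j hP).
move: (P i i) (P j j) (P i j) => a b z a_ge0 b_ge0.
have -> : `|z| * (`|z| * a) + `|z| * (- z^* * z) +
    (- z * (`|z| * z^*) + - z * (- z^* * b)) = `|z| ^+ 2 * (a + b - `|z| *+ 2).
  transitivity (`|z| ^+ 2 * a - `|z| * (z * z^*) *+ 2 + z * z^* * b); first by ring.
  by rewrite -(normCK z); ring.
have [->|z_neq0] := eqVneq z 0; first by rewrite normr0 mul0rn addr_ge0.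
by rewrite pmulr_rge0 ?subr_ge0 // exprn_gt0 // normr_gt0.
Qed.

Lemma formE n (D : 'M[C]_n) u v :
  sform D u v = \sum_i \sum_j u 0 i * D i j * (v 0 j)^*.
Proof.
rewrite /form mxE exchange_big; apply: eq_bigr => j _.
by rewrite !mxE mulr_suml.
Qed.

Lemma sform1 n (u : 'rV[C]_n) : sform 1%:M u u = \sum_i `|u 0 i| ^+ 2.
Proof.
rewrite /form mulmx1 mxE; apply: eq_bigr => i _.
by rewrite !mxE normCK.
Qed.

Lemma norm_sform_le n (D : 'M[C]_n) u :
  `|sform D u u| <= (\sum_i \sum_j `|D i j|) * sform 1%:M u u.
Proof.
rewrite formE sform1 mulr_suml; apply: (le_trans (ler_norm_sum _ _ _)).
apply: ler_sum => i _; rewrite mulr_suml; apply: (le_trans (ler_norm_sum _ _ _)).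
apply: ler_sum => j _; rewrite !normrM norm_conjC mulrAC mulrC.
by rewrite ler_wpM2l ?mul_norm_le_sum.
Qed.

Lemma psd_hermitian_shift n (D : 'M[C]_n) (c : C) :
  adj D = D -> \sum_i \sum_j `|D i j| <= c -> psd (D + c *: 1%:M).
Proof.
move=> hD hc; apply/psdE => u.
have -> : sform (D + c *: 1%:M) u u = sform D u u + c * sform 1%:M u u.
  by rewrite /form mulmxDr mulmxDl -scalemxAr -scalemxAl mxE [in X in _ + X]mxE.
have real_D : sform D u u \is Num.real by rewrite CrealE conj_form hD.
have s_ge0 : 0 <= sform 1%:M u u by have /psdE := @psd1 n; apply.
rewrite -lerBlDr sub0r lerNl.
have le_norm : - sform D u u <= `|sform D u u|.
  by rewrite -normrN real_ler_norm // rpredN.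
exact: le_trans (le_trans le_norm (norm_sform_le D u)) (ler_wpM2r s_ge0 hc).
Qed.

Lemma mxtrace_mul_hermitian_real n (P Q : 'M[C]_n) :
  adj P = P -> adj Q = Q -> \tr (P *m Q) \is Num.real.
Proof.
by move=> hermP hermQ; rewrite CrealE -mxtrace_adj adjM hermP hermQ mxtrace_mulC.
Qed.

End PositiveMatrices.

Section RealScalars.
Variable R : realType.

HB.instance Definition _ := GRing.RMorphism.copy (@RtoC R) (real_complex R).

Lemma RtoC_ge0 (r : R) : (0 <= RtoC r) = (0 <= r).
Proof. exact: ler0c. Qed.

Lemma RtoC_le (r s : R) : (RtoC r <= RtoC s) = (r <= s).
Proof. exact: lecR. Qed.

Lemma RtoC_lt (r s : R) : (RtoC r < RtoC s) = (r < s).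
Proof. exact: ltcR. Qed.

Lemma RtoC_Re (z : R[i]) : z \is Num.real -> RtoC (complex.Re z) = z.
Proof. exact: RRe_real. Qed.

Lemma Re_RtoCM (r : R) (z : R[i]) : complex.Re (RtoC r * z) = r * complex.Re z.
Proof. by case: z => a b; rewrite /RtoC /=; simpc. Qed.

Lemma Im_RtoCM (r : R) (z : R[i]) : complex.Im (RtoC r * z) = r * complex.Im z.
Proof. by case: z => a b; rewrite /RtoC /=; simpc. Qed.

End RealScalars.

(** * Completely positive maps and the Heisenberg picture *)

Section CompletelyPositiveMaps.
Variable R : realType.
Local Notation C := R[i].

Lemma psd_castmx m m' (e : m = m') (B : 'M[C]_m) : psd (castmx (e, e) B) <-> psd B.
Proof. by case: m' / e; rewrite castmx_id. Qed.

(* Positivity is complete positivity at level 1, where the ampliation of Phi is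
   Phi up to a cast. *)
Lemma CP_psd m n (Phi : 'M[C]_m -> 'M[C]_n) rho :
  is_CP Phi -> psd rho -> psd (Phi rho).
Proof.
move=> [_ cpPhi] psd_rho.
have delta1 : delta_mx 0 0 = 1%:M :> 'M[C]_1 by apply/matrixP => i j; rewrite !ord1 !mxE.
have blockK : blockmx ((1%:M : 'M[C]_1) *t rho) 0 0 = rho.
  by apply/matrixP => a b; rewrite mxE tensmxE mxE eqxx mul1r.
have := cpPhi 1%N ((1%:M : 'M[C]_1) *t rho).
rewrite /ampliation !big_ord1 blockK delta1 !tens_scalar_mx !scale1r !psd_castmx.
exact.
Qed.

Lemma ampliation_id k m (Y : 'M[C]_(k * m)) : ampliation id Y = Y.
Proof.
apply/matrixP => p q; rewrite summxE.
case: (mxtens_indexP p) => i a; case: (mxtens_indexP q) => j b.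
rewrite (bigD1 i) //= [X in _ + X]big1 => [|i' ne_i'i]; last first.
  rewrite summxE big1 // => j' _.
  by rewrite tensmxE mxE eq_sym (negbTE ne_i'i) mul0r.
rewrite addr0 summxE (bigD1 j) //= [X in _ + X]big1 => [|j' ne_j'j]; last first.
  by rewrite tensmxE mxE [j == j']eq_sym (negbTE ne_j'j) andbF mul0r.
by rewrite addr0 tensmxE !mxE !eqxx mul1r.
Qed.

Lemma id_instrument n : is_instrument (fun (_ : 'I_1) (rho : 'M[C]_n) => rho).
Proof.
split=> [_|rho]; last by rewrite big_ord1.
by split=> [//|k Y psdY]; rewrite ampliation_id.
Qed.

End CompletelyPositiveMaps.

Section DualMap.
Variable R : realType.
Local Notation C := R[i].
Variables (m n : nat) (E : 'M[C]_m -> 'M[C]_n).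

Definition dualmap (Y : 'M[C]_n) : 'M[C]_m :=
  \matrix_(a, b) \tr (E (delta_mx b a) *m Y).

Lemma dualmap_is_linear : linear dualmap.
Proof.
move=> c Y Z; apply/matrixP => a b.
by rewrite !mxE mulmxDr mxtraceD -scalemxAr mxtraceZ.
Qed.

HB.instance Definition _ :=
  GRing.isLinear.Build C 'M[C]_n 'M[C]_m _ dualmap dualmap_is_linear.

Hypothesis linE : linear E.

Lemma mxtrace_dualmap rho Y : \tr (E rho *m Y) = \tr (rho *m dualmap Y).
Proof.
pose El : {linear 'M[C]_m -> 'M[C]_n} :=
  HB.pack E (GRing.isLinear.Build _ _ _ _ E linE).
have E_sum (I : finType) (F : I -> 'M[C]_m) : E (\sum_i F i) = \sum_i E (F i).
  exact: (linear_sum El).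
have E_Z c A : E (c *: A) = c *: E A by exact: (linearZ_LR El).
rewrite {1}(matrix_sum_delta rho) E_sum mulmx_suml raddf_sum [RHS]/mxtrace.
apply: eq_bigr => a _; rewrite mxE E_sum mulmx_suml raddf_sum.
by apply: eq_bigr => b _; rewrite E_Z -scalemxAl /= mxtraceZ mxE.
Qed.

End DualMap.

Section DualMapPositivity.
Variable R : realType.
Local Notation C := R[i].

Lemma dualmap_psd m n (E : 'M[C]_m -> 'M[C]_n) Y :
  is_CP E -> psd Y -> psd (dualmap E Y).
Proof.
move=> cpE psdY v.
rewrite [X in 0 <= X](_ : _ = \tr (adj v *m dualmap E Y *m v)); last first.
  by rewrite /mxtrace big_ord1.
rewrite mxtrace_mulC mulmxA.
rewrite -mxtrace_dualmap; last by case: cpE.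
by apply: mxtrace_mul_psd_ge0 => //; apply: CP_psd => //; apply: psd_rank1.
Qed.

Lemma dualmap_instrument_sum m n (I : finType) (E : I -> 'M[C]_m -> 'M[C]_n) :
  is_instrument E -> \sum_i dualmap (E i) 1%:M = 1%:M.
Proof.
move=> [_ tpE]; apply/matrixP => a b; rewrite summxE.
under eq_bigr do rewrite mxE mulmx1.
rewrite -raddf_sum /= tpE /mxtrace (bigD1 b) //= big1 => [|c ne_cb].
  by rewrite addr0 !mxE eqxx eq_sym.
by rewrite mxE (negbTE ne_cb).
Qed.

End DualMapPositivity.

(** * Simple PMDs as joint POVMs *)

Lemma marginal_prod_ffun (K : comPzRingType) (I J : finType) (p : I -> J -> K) i0 j0 :
  (forall i, \sum_j p i j = 1) ->
  \sum_(f : {ffun I -> J} | f i0 == j0) \prod_i p i (f i) = p i0 j0.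
Proof.
move=> sum_p1.
pose q i j := if i == i0 then (j == j0)%:R * p i j else p i j.
transitivity (\sum_(f : {ffun I -> J}) \prod_i q i (f i)).
  rewrite big_mkcond /=; apply: eq_bigr => f _.
  rewrite [RHS](bigD1 i0) //= {1}/q eqxx [in LHS](bigD1 i0) //=.
  rewrite [X in _ = _ * X](eq_bigr (fun i => p i (f i))) => [|i /negbTE ne_ii0].
    by case: (f i0 == j0); rewrite ?mul1r ?mul0r.
  by rewrite /q ne_ii0.
rewrite -bigA_distr_bigA (bigD1 i0) //= [X in _ * X]big1 => [|i /negbTE ne_ii0].
  rewrite mulr1 /q eqxx (bigD1 j0) //= eqxx mul1r big1 ?addr0 // => j /negbTE ->.
  by rewrite mul0r.
by rewrite /q ne_ii0 sum_p1.
Qed.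

Lemma distr_delta (R : realType) (T : finType) (t0 : T) :
  distr (fun t => (t == t0)%:R : R).
Proof.
split=> [t|]; first exact: ler0n.
by rewrite (bigD1 t0) //= eqxx big1 ?addr0 // => t /negbTE ->.
Qed.

Section SimplePMD.
Variable R : realType.
Local Notation C := R[i].
Variables (n : nat) (X A : finType).

Lemma simple_PMD_of (I : finType) (Mt : I -> 'M[C]_n) (p : (I * X)%type -> A -> R)
    (M : X -> A -> 'M[C]_n) :
  is_POVM Mt -> cond_distr p ->
  (forall x a, M x a = \sum_i RtoC (p (i, x) a) *: Mt i) -> simple_PMD M.
Proof.
move=> [psdMt sumMt] p_distr eM; split; last by exists I, Mt, p.
split=> [x a|x].
  rewrite eM; apply: psd_sum => i _; apply: psdZ (psdMt i).
  by rewrite RtoC_ge0; case: (p_distr (i, x)).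
rewrite (eq_bigr _ (fun a _ => eM x a)) exchange_big /= -sumMt.
apply: eq_bigr => i _; rewrite -scaler_suml -rmorph_sum.
by case: (p_distr (i, x)) => _ ->; rewrite rmorph1 scale1r.
Qed.

Definition jointmx (G : {ffun X -> A} -> 'M[C]_n) (x : X) (a : A) : 'M[C]_n :=
  \sum_(l : {ffun X -> A} | l x == a) G l.

Lemma simple_PMD_jointP (M : X -> A -> 'M[C]_n) :
  simple_PMD M <-> exists2 G, is_POVM G & M = jointmx G.
Proof.
split=> [[_ [I [Mt [p [[psdMt sumMt] [p_distr eM]]]]]]|[G G_POVM ->]]; last first.
  pose p (lx : {ffun X -> A} * X) a : R := (a == lx.1 lx.2)%:R.
  apply: (simple_PMD_of (Mt := G) (p := p)) => // [[l x]|x a].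
    exact: distr_delta.
  rewrite /jointmx big_mkcond /=; apply: eq_bigr => l _.
  by rewrite rmorph_nat eq_sym; case: (_ == _); rewrite ?scale1r ?scale0r.
pose G (l : {ffun X -> A}) := \sum_i RtoC (\prod_x p (i, x) (l x)) *: Mt i.
exists G.
  split=> [l|].
    apply: psd_sum => i _; apply: psdZ (psdMt i); rewrite RtoC_ge0.
    by apply: prodr_ge0 => x _; case: (p_distr (i, x)).
  rewrite exchange_big /= -sumMt; apply: eq_bigr => i _.
  rewrite -scaler_suml -rmorph_sum -(bigA_distr_bigA (fun x b => p (i, x) b)) /=.
  by rewrite big1 ?rmorph1 ?scale1r // => x _; case: (p_distr (i, x)).
apply/funext => x; apply/funext => a; rewrite eM /jointmx exchange_big /=.
apply: eq_bigr => i _; rewrite -scaler_suml -rmorph_sum.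
rewrite (marginal_prod_ffun (p := fun x b => p (i, x) b)) // => x'.
by case: (p_distr (i, x')).
Qed.

End SimplePMD.

Lemma simple_PMD_const (R : realType) n (X A : finType) (a0 : A) :
  simple_PMD (fun (_ : X) (a : A) => (a == a0)%:R *: (1%:M : 'M[R[i]]_n)).
Proof.
apply: (simple_PMD_of (Mt := fun _ : 'I_1 => 1%:M) (p := fun _ a => (a == a0)%:R)).
- by split=> [_|]; [apply: psd1 | rewrite big_ord1].
- by move=> _; apply: distr_delta.
- by move=> x a; rewrite big_ord1 rmorph_nat.
Qed.

Lemma simple_PMD_dim0 (R : realType) (X A : finType) (M : X -> A -> 'M[R[i]]_0) :
  simple_PMD M.
Proof.
apply: (simple_PMD_of (Mt := fun _ : 'I_0 => 0) (p := fun _ _ => 0)).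
- by split=> [_|]; [apply: psd0 | apply/matrixP => -[]].
- by case=> -[].
- by move=> x a; apply/matrixP => -[].
Qed.

Lemma simple_PMD_void (R : realType) n (X A : finType) (M : X -> A -> 'M[R[i]]_n) :
  (X -> False) -> simple_PMD M.
Proof.
move=> X0; apply: (simple_PMD_of (Mt := fun _ : 'I_1 => 1%:M) (p := fun _ _ => 0)).
- by split=> [_|]; [apply: psd1 | rewrite big_ord1].
- by move=> [_ x]; case: (X0 x).
- by move=> x; case: (X0 x).
Qed.

Lemma sum_triple (V : nmodType) (T1 T2 T3 : finType) (G : T1 * T2 * T3 -> V) :
  \sum_t G t = \sum_a \sum_b \sum_c G (a, b, c).
Proof.
transitivity (\sum_(t : T1 * T2 * T3) G (t.1.1, t.1.2, t.2)).
  by apply: eq_bigr => [[[]]].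
rewrite -(pair_bigA _ (fun ab c => G (ab.1, ab.2, c))) /=.
by rewrite -(pair_bigA _ (fun a b => \sum_c G (a, b, c))).
Qed.

Lemma sum_quad (V : nmodType) (T1 T2 T3 T4 : finType) (G : T1 * T2 * T3 * T4 -> V) :
  \sum_t G t = \sum_a \sum_b \sum_c \sum_d G (a, b, c, d).
Proof.
transitivity (\sum_(t : T1 * T2 * T3 * T4) G (t.1.1.1, t.1.1.2, t.1.2, t.2)).
  by apply: eq_bigr => [[[[]]]].
rewrite -(pair_bigA _ (fun abc d => G (abc.1.1, abc.1.2, abc.2, d))) /= sum_triple.
by apply: eq_bigr => a _; apply: eq_bigr => b _; apply: eq_bigr.
Qed.

(** * Guessing games *)

Section Games.
Variable R : realType.
Local Notation C := R[i].
Variables (m : nat) (W Z : finType).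

Definition game_value (F rho : W -> Z -> 'M[C]_m) : C :=
  \sum_w \sum_z \tr (F w z *m rho w z).

Lemma game_value_ge0 F rho : is_PMD F -> is_game rho -> 0 <= game_value F rho.
Proof.
move=> [psdF _] [psd_rho _].
by do 2!(apply: sumr_ge0 => ? _); apply: mxtrace_mul_psd_ge0.
Qed.

Lemma game_value_le1 F rho : is_PMD F -> is_game rho -> game_value F rho <= 1.
Proof.
move=> [psdF sumF] [psd_rho <-]; apply: ler_sum => w _; apply: ler_sum => z _.
have -> : \tr (rho w z) = \sum_z' \tr (F w z' *m rho w z).
  by rewrite -raddf_sum -mulmx_suml sumF mul1mx.
rewrite (bigD1 z) //= lerDl sumr_ge0 // => z' _.
exact: mxtrace_mul_psd_ge0.
Qed.

Lemma game_value_real F rho : is_PMD F -> is_game rho ->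
  RtoC (complex.Re (game_value F rho)) = game_value F rho.
Proof. by move=> PMD_F game_rho; rewrite RtoC_Re // ger0_real // game_value_ge0. Qed.

End Games.

Section Strategies.
Variable R : realType.
Local Notation C := R[i].
Variables (m n : nat) (W Z V Cc Rr I : finType).
Variables (N : V -> Cc -> 'M[C]_n) (mu : Rr -> R) (E : Rr -> I -> 'M[C]_m -> 'M[C]_n).
Variables (p : (W * I * Rr)%type -> V -> R) (q : (Cc * W * I * Rr)%type -> Z -> R).

(* The POVM of this simple PMD is indexed by (r, i, j), with j indexing the POVM
   behind N; its post-processing composes p, the post-processing of N, and q. *)
Definition heisenberg_PMD (w : W) (z : Z) : 'M[C]_m :=
  \sum_r \sum_i \sum_v \sum_c
    RtoC (mu r * q (c, w, i, r) z * p (w, i, r) v) *: dualmap (E r i) (N v c).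

Lemma guess_valueE rho : (forall r i, linear (E r i)) ->
  guess_value N rho mu E p q = game_value heisenberg_PMD rho.
Proof.
move=> linE; apply: eq_bigr => w _; apply: eq_bigr => z _.
do 4!(rewrite mulmx_suml raddf_sum /=; apply: eq_bigr => ? _).
by rewrite -scalemxAl mxtraceZ [\tr (dualmap _ _ *m _)]mxtrace_mulC -mxtrace_dualmap.
Qed.

Lemma heisenberg_PMD_simple :
  simple_PMD N -> distr mu -> (forall r, is_instrument (E r)) ->
  cond_distr p -> cond_distr q -> simple_PMD heisenberg_PMD.
Proof.
move=> [_ [J [Nt [pi [[psdNt sumNt] [pi_distr eN]]]]]] [mu_ge0 sum_mu].
move=> instrE p_distr q_distr.
have cpE r i : is_CP (E r i) by case: (instrE r) => /(_ i).
pose Mt (t : Rr * I * J) := RtoC (mu t.1.1) *: dualmap (E t.1.1 t.1.2) (Nt t.2).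
pose p' (tw : Rr * I * J * W) z := \sum_v \sum_c
  p (tw.2, tw.1.1.2, tw.1.1.1) v * pi (tw.1.2, v) c * q (c, tw.2, tw.1.1.2, tw.1.1.1) z.
apply: (simple_PMD_of (Mt := Mt) (p := p')).
- split=> [[[r i] j]|]; first by apply: psdZ; [rewrite RtoC_ge0 | apply: dualmap_psd].
  have -> : 1%:M = \sum_r RtoC (mu r) *: (1%:M : 'M[C]_m).
    by rewrite -scaler_suml -rmorph_sum sum_mu rmorph1 scale1r.
  rewrite sum_triple.
  apply: eq_bigr => r _; rewrite -(dualmap_instrument_sum (instrE r)) scaler_sumr.
  by apply: eq_bigr => i _; rewrite -sumNt linear_sum scaler_sumr.
- move=> [[[r i] j] w]; split=> [z|].
    apply: sumr_ge0 => v _; apply: sumr_ge0 => c _; rewrite !mulr_ge0 //.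
    + by case: (p_distr (w, i, r)).
    + by case: (pi_distr (j, v)).
    + by case: (q_distr (c, w, i, r)).
  rewrite exchange_big /= -[RHS](proj2 (p_distr (w, i, r))); apply: eq_bigr => v _.
  rewrite exchange_big /= -[RHS]mulr1 -(proj2 (pi_distr (j, v))) mulr_sumr.
  apply: eq_bigr => c _.
  by rewrite -mulr_sumr (proj2 (q_distr (c, w, i, r))) mulr1.
- move=> w z; rewrite sum_triple; apply: eq_bigr => r _; apply: eq_bigr => i _.
  rewrite (eq_bigr (fun v => \sum_j \sum_c RtoC (mu r * q (c, w, i, r) z *
      p (w, i, r) v * pi (j, v) c) *: dualmap (E r i) (Nt j))) => [|v _]; last first.
    rewrite exchange_big; apply: eq_bigr => c _ /=.
    rewrite eN linear_sum scaler_sumr; apply: eq_bigr => j _.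
    by rewrite linearZ scalerA -rmorphM.
  rewrite exchange_big; apply: eq_bigr => j _.
  rewrite /p' /Mt /= scalerA -rmorphM mulr_suml rmorph_sum scaler_suml.
  apply: eq_bigr => v _; rewrite mulr_suml rmorph_sum scaler_suml.
  by apply: eq_bigr => c _; congr (_ *: _); apply: congr1; ring.
Qed.

End Strategies.

Section GuessingProbabilities.
Variable R : realType.
Local Notation C := R[i].
Local Open Scope classical_set_scope.

(* The hypothesis [0 <= b] covers the empty set, whose supremum is 0. *)
Lemma sup_le_nonneg (S : set R) b : 0 <= b -> ubound S b -> sup S <= b.
Proof.
move=> b_ge0 ubS; have [S_ne|S0] := pselect (S !=set0); first exact: ge_sup.
suff -> : S = set0 by rewrite sup0.
by apply/seteqP; split=> // t St; apply: S0; exists t.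
Qed.

Variables (m : nat) (W Z : finType).

Lemma guess_value_le n (V Cc Rr I : finType) (N : V -> Cc -> 'M[C]_n)
    (rho : W -> Z -> 'M[C]_m) mu (E : Rr -> I -> 'M[C]_m -> 'M[C]_n) p q b :
  simple_PMD N -> distr mu -> (forall r, is_instrument (E r)) ->
  cond_distr p -> cond_distr q ->
  (forall F, simple_PMD F -> game_value F rho <= RtoC b) ->
  guess_value N rho mu E p q <= RtoC b.
Proof.
move=> simpleN mu_distr instrE p_distr q_distr le_b.
rewrite guess_valueE => [|r i]; last by case: (instrE r) => /(_ i) [].
exact/le_b/heisenberg_PMD_simple.
Qed.

Lemma guess_value_direct (M rho : W -> Z -> 'M[C]_m) :
  exists (mu : 'I_1 -> R) (E : 'I_1 -> 'I_1 -> 'M[C]_m -> 'M[C]_m)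
    (p : (W * 'I_1 * 'I_1)%type -> W -> R) (q : (Z * W * 'I_1 * 'I_1)%type -> Z -> R),
    [/\ distr mu, forall r, is_instrument (E r), cond_distr p, cond_distr q &
        guess_value M rho mu E p q = game_value M rho].
Proof.
exists (fun _ => 1), (fun _ _ rho => rho), (fun t v => (v == t.1.1)%:R),
  (fun t z => (z == t.1.1.1)%:R).
split=> [|r|t|t|]; do ?[exact: distr_delta | exact: id_instrument].
  by split=> [_|]; rewrite ?big_ord1.
apply: eq_bigr => w _; apply: eq_bigr => z _; rewrite !big_ord1.
rewrite (bigD1 w) //= (bigD1 z) //= !big1 ?addr0 => [|v ne_vw|c ne_cz].
- by rewrite !eqxx !mulr1 mul1r mxtrace_mulC.
- by rewrite big1 // => c _; rewrite (negbTE ne_vw) mulr0 rmorph0 mul0r.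
- by rewrite (eq_sym z) (negbTE ne_cz) mulr0 mul0r rmorph0 mul0r.
Qed.

Lemma P_guess_le n (V Cc : finType) (N : V -> Cc -> 'M[C]_n)
    (rho : W -> Z -> 'M[C]_m) b :
  simple_PMD N -> 0 <= b ->
  (forall F, simple_PMD F -> game_value F rho <= RtoC b) -> P_guess N rho <= b.
Proof.
move=> simpleN b_ge0 le_b; apply: sup_le_nonneg b_ge0 _.
move=> t [Rr [I [mu [E [p [q [mu_distr [instrE [p_distr [q_distr t_val]]]]]]]]]].
by rewrite -RtoC_le t_val guess_value_le.
Qed.

Lemma P_guess_ge n (V Cc : finType) (N : V -> Cc -> 'M[C]_n)
    (rho : W -> Z -> 'M[C]_m) (t : R) :
  simple_PMD N -> is_game rho ->
  (exists (Rr I : finType) (mu : Rr -> R) (E : Rr -> I -> 'M[C]_m -> 'M[C]_n)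
     (p : (W * I * Rr)%type -> V -> R) (q : (Cc * W * I * Rr)%type -> Z -> R),
     distr mu /\ (forall r, is_instrument (E r)) /\ cond_distr p /\ cond_distr q /\
     RtoC t = guess_value N rho mu E p q) ->
  t <= P_guess N rho.
Proof.
move=> simpleN game_rho t_in; apply: sup_upper_bound => //; split; first by exists t.
exists 1 => s [Rr [I [mu [E [p [q [mu_distr [instrE [p_distr [q_distr s_val]]]]]]]]]].
rewrite -RtoC_le s_val guess_value_le // => F [PMD_F _].
by rewrite rmorph1 game_value_le1.
Qed.

Lemma P_guess_le_simple n (V Cc : finType) (N : V -> Cc -> 'M[C]_n)
    (rho : W -> Z -> 'M[C]_m) :
  simple_PMD N -> is_game rho -> P_guess N rho <= P_guess_simple rho.
Proof.
move=> simpleN game_rho; apply: sup_upper_bound; last by exists n, V, Cc, N.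
split; first by exists (P_guess N rho), n, V, Cc, N.
exists 1 => _ [n' [V' [Cc' [N' [simpleN' ->]]]]].
by apply: P_guess_le simpleN' ler01 _ => F [PMD_F _]; rewrite rmorph1 game_value_le1.
Qed.

Lemma P_guess_simple_le (rho : W -> Z -> 'M[C]_m) b : 0 <= b ->
  (forall F : W -> Z -> 'M[C]_m, simple_PMD F -> game_value F rho <= RtoC b) ->
  P_guess_simple rho <= b.
Proof.
move=> b_ge0 le_b; apply: (sup_le_nonneg b_ge0) => t [n [V [Cc [N [simpleN ->]]]]].
exact: P_guess_le simpleN b_ge0 le_b.
Qed.

Lemma game_value_le_P_guess_simple (M rho : W -> Z -> 'M[C]_m) :
  simple_PMD M -> is_game rho -> game_value M rho <= RtoC (P_guess_simple rho).
Proof.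
move=> simpleM game_rho.
rewrite -(game_value_real (proj1 simpleM) game_rho) RtoC_le.
apply: le_trans (P_guess_le_simple simpleM game_rho); apply: P_guess_ge => //.
have [mu [E [p [q [mu_distr instrE p_distr q_distr val]]]]] := guess_value_direct M rho.
exists 'I_1, 'I_1, mu, E, p, q; do !split => //.
by rewrite val game_value_real //; case: simpleM.
Qed.

End GuessingProbabilities.

(** * The nearest simple PMD *)

Section HilbertSchmidt.
Variable R : realType.
Local Notation C := R[i].
Variables (n : nat) (X A : finType).
Local Notation family := (X -> A -> 'M[C]_n).
Local Notation index := (X * A * 'I_n * 'I_n)%type.

Definition fam_entry (D : family) (k : index) : C := D k.1.1.1 k.1.1.2 k.1.2 k.2.

Definition fam_sub (D F : family) : family := fun x a => D x a - F x a.

Definition hs_dot (D F : family) : R :=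
  \sum_k (complex.Re (fam_entry D k) * complex.Re (fam_entry F k) +
          complex.Im (fam_entry D k) * complex.Im (fam_entry F k)).

Lemma fam_entryB D F k : fam_entry (fam_sub D F) k = fam_entry D k - fam_entry F k.
Proof. by rewrite /fam_entry /fam_sub !mxE. Qed.

Lemma hs_dot_ge0 D : 0 <= hs_dot D D.
Proof. by apply: sumr_ge0 => k _; rewrite -!expr2 addr_ge0 ?sqr_ge0. Qed.

Lemma hs_dot_eq0 D : hs_dot D D = 0 -> D = fun _ _ => 0.
Proof.
move=> /eqP; rewrite psumr_eq0 => [/allP D0|k _]; last first.
  by rewrite -!expr2 addr_ge0 ?sqr_ge0.
apply/funext => x; apply/funext => a; apply/matrixP => i j; rewrite mxE.
have /implyP/(_ isT) := D0 (x, a, i, j) (mem_index_enum _).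
rewrite -!expr2 paddr_eq0 ?sqr_ge0 // !sqrf_eq0 => /andP[/eqP Re0 /eqP Im0].
by rewrite [LHS]complexE /fam_entry /= Re0 Im0 mulr0 addr0.
Qed.

Lemma hs_dotBr D F G : hs_dot D (fam_sub F G) = hs_dot D F - hs_dot D G.
Proof.
rewrite /hs_dot -sumrB; apply: eq_bigr => k _.
by rewrite fam_entryB !raddfB /=; ring.
Qed.

Lemma hs_dot_sub_scale D E t (DtE := fam_sub D (fun x a => RtoC t *: E x a)) :
  hs_dot DtE DtE = hs_dot D D - 2 * t * hs_dot D E + t ^+ 2 * hs_dot E E.
Proof.
rewrite /hs_dot !mulr_sumr -sumrB -big_split /=; apply: eq_bigr => k _.
rewrite fam_entryB !raddfB /= /fam_entry mxE Re_RtoCM Im_RtoCM; ring.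
Qed.

Lemma hs_dot_trace D F : (forall x a, adj (D x a) = D x a) ->
  complex.Re (\sum_x \sum_a \tr (F x a *m D x a)) = hs_dot D F.
Proof.
move=> hermD; rewrite /hs_dot sum_quad raddf_sum; apply: eq_bigr => x _.
rewrite raddf_sum; apply: eq_bigr => a _; rewrite raddf_sum; apply: eq_bigr => i _.
rewrite mxE raddf_sum; apply: eq_bigr => j _.
rewrite -{1}hermD adjE /fam_entry /=.
by case: (F x a i j) => ? ?; case: (D x a i j) => ? ? /=; simpc; ring.
Qed.

End HilbertSchmidt.

Lemma complex_coords_bound (R : realType) (z : R[i]) :
  `|z| <= 1 -> `|complex.Re z| <= 1 /\ `|complex.Im z| <= 1.
Proof.
move=> z_le1; have : (complex.Re z) ^+ 2 + (complex.Im z) ^+ 2 <= 1.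
  by rewrite -lecR add_Re2_Im2 exprn_ile1.
by rewrite !ler_norml; nra.
Qed.

Lemma continuous_sum (R : realType) (T : topologicalType) (I : finType)
    (F : I -> T -> R) :
  (forall i, continuous (F i)) -> continuous (fun t => \sum_i F i t).
Proof. by move=> contF; apply: continuous_big => //; apply: add_continuous. Qed.

Lemma scalar_continuous (R : realType) N (f : 'rV[R]_N -> R) :
  scalar f -> continuous f.
Proof.
move=> scal_f; pose fl : {linear 'rV[R]_N -> R^o | *%R} :=
  HB.pack f (GRing.isLinear.Build _ _ _ _ f scal_f).
have f_sum (F : 'I_N -> 'rV[R]_N) : f (\sum_k F k) = \sum_k f (F k).
  exact: (linear_sum fl).
have f_Z a g : f (a *: g) = a * f g by exact: (linearZ_LR fl).
have -> : f = fun g => \sum_k g 0 k * f (delta_mx 0 k).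
  apply/funext => g; rewrite {1}(matrix_sum_delta g) big_ord1 f_sum.
  by apply: eq_bigr => k _; rewrite f_Z.
apply: continuous_sum => k g; apply: continuousM; last exact: cst_continuous.
exact: coord_continuous.
Qed.

Section PovmCoordinates.
Variable R : realType.
Local Notation C := R[i].
Variables (n : nat) (X A : finType).
Local Notation Lam := {ffun X -> A}.
Local Notation coord := (Lam * 'I_n * 'I_n * bool)%type.
Local Notation space := 'rV[R]_#|{: coord}|.
Local Open Scope classical_set_scope.

(* A family G : Lam -> 'M_n is encoded by the real (false) and imaginary (true)
   parts of its entries. *)
Definition decode (g : space) (l : Lam) : 'M[C]_n :=
  \matrix_(i, j)
    (g 0 (enum_rank (l, i, j, false)) +i* g 0 (enum_rank (l, i, j, true)))%C.

Definition encode (G : Lam -> 'M[C]_n) : space :=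
  \row_k let: (l, i, j, b) := enum_val k in
         if b then complex.Im (G l i j) else complex.Re (G l i j).

Lemma encodeK G : decode (encode G) = G.
Proof.
apply/funext => l; apply/matrixP => i j; rewrite !mxE !enum_rankK /=.
by case: (G l i j).
Qed.

Lemma decode_affine a g h :
  decode (a *: g + h) = fun l => RtoC a *: decode g l + decode h l.
Proof. by apply/funext => l; apply/matrixP => i j; rewrite !mxE /=; simpc. Qed.

Lemma decode0 : decode 0 = fun _ => 0.
Proof. by apply/funext => l; apply/matrixP => i j; rewrite !mxE. Qed.

Section ContinuousLinearFunctional.
Variable Phi : (Lam -> 'M[C]_n) -> C.
Hypothesis linPhi :
  forall a G H, Phi (fun l => RtoC a *: G l + H l) = RtoC a * Phi G + Phi H.

Lemma decode_continuous :
  continuous (fun g => complex.Re (Phi (decode g))) /\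
  continuous (fun g => complex.Im (Phi (decode g))).
Proof.
split; apply: scalar_continuous => a g h.
  by rewrite decode_affine linPhi raddfD /= Re_RtoCM.
by rewrite decode_affine linPhi raddfD /= Im_RtoCM.
Qed.

Lemma closed_decode_eq c : closed [set g | Phi (decode g) = c].
Proof.
have [contRe contIm] := decode_continuous.
rewrite (_ : [set g | _] = [set g | complex.Re (Phi (decode g)) = complex.Re c] `&`
                           [set g | complex.Im (Phi (decode g)) = complex.Im c]).
  apply: closedI.
    by move/continuous_closedP: contRe => /(_ _ (@closed_eq _ (complex.Re c))).
  by move/continuous_closedP: contIm => /(_ _ (@closed_eq _ (complex.Im c))).
apply/seteqP; split=> g /=; first by move=> ->.
by case: (Phi (decode g)) c => ? ? [? ?] /= [-> ->].
Qed.

Lemma closed_decode_ge0 : closed [set g | 0 <= Phi (decode g)].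
Proof.
have [contRe contIm] := decode_continuous.
rewrite (_ : [set g | _] = [set g | complex.Im (Phi (decode g)) = 0] `&`
                           [set g | 0 <= complex.Re (Phi (decode g))]).
  apply: closedI.
    by move/continuous_closedP: contIm => /(_ _ (@closed_eq _ 0)).
  by move/continuous_closedP: contRe => /(_ _ (@closed_ge _ 0)).
apply/seteqP; split=> g /=; rewrite lecE /=.
  by move=> /andP[/eqP <-].
by move=> [-> ->]; rewrite eqxx.
Qed.

End ContinuousLinearFunctional.

Definition povm_coords : set space := [set g | is_POVM (decode g)].

Lemma closed_povm_coords : closed povm_coords.
Proof.
rewrite (_ : povm_coords =
  (\bigcap_(lv in [set: Lam * 'cV[C]_n])
     [set g | 0 <= (adj lv.2 *m decode g lv.1 *m lv.2) 0 0]) `&`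
  (\bigcap_(ij in [set: 'I_n * 'I_n])
     [set g | (\sum_l decode g l) ij.1 ij.2 = (1%:M : 'M[C]_n) ij.1 ij.2])).
  apply: closedI.
    apply: closed_bigI => -[l v] _ /=.
    apply: (closed_decode_ge0 (Phi := fun G => (adj v *m G l *m v) 0 0)) => a G H.
    by rewrite mulmxDr mulmxDl -scalemxAr -scalemxAl !mxE.
  apply: closed_bigI => -[i j] _ /=.
  apply: (closed_decode_eq (Phi := fun G => (\sum_l G l) i j)) => a G H.
  by rewrite big_split -scaler_sumr /= !mxE.
apply/seteqP; split=> g.
  move=> [psd_g sum_g]; split=> [[l v] _|[i j] _] /=; first exact: psd_g.
  by rewrite sum_g.
move=> [psd_g sum_g]; split=> [l v|]; first exact: (psd_g (l, v)).
by apply/matrixP => i j; apply: (sum_g (i, j)).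
Qed.

Lemma povm_entry_bound (G : Lam -> 'M[C]_n) l i j : is_POVM G -> `|G l i j| <= 1.
Proof.
move=> [psdG sumG].
have diag_le1 k : G l k k <= 1.
  have : (\sum_l' G l') k k = 1 by rewrite sumG mxE eqxx.
  rewrite summxE (bigD1 l) //= => <-; rewrite lerDl sumr_ge0 // => l' _.
  exact: psd_diag_ge0.
rewrite -(ler_pMn2r (n := 2)) //; apply: le_trans (psd_offdiag i j (psdG l)) _.
by rewrite mulr2n lerD.
Qed.

Lemma compact_povm_coords : compact povm_coords.
Proof.
apply: (subclosed_compact closed_povm_coords).
  exact: (@rV_compact R _ (fun=> `[-1, 1]) (fun=> @segment_compact R _ _)).
move=> g povm_g k; rewrite /= in_itv /= -ler_norml.
case ek: (enum_val k) => [[[l i] j] b].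
have [Re_le1 Im_le1] := complex_coords_bound (povm_entry_bound l i j povm_g).
have -> : k = enum_rank (l, i, j, b) by rewrite -ek enum_valK.
by case: b {ek} Re_le1 Im_le1; rewrite mxE.
Qed.

End PovmCoordinates.

Lemma quad_ge0_le0 (R : realFieldType) (b c : R) : 0 <= c ->
  (forall t, 0 < t -> t <= 1 -> 0 <= t ^+ 2 * c - 2 * t * b) -> b <= 0.
Proof.
move=> c_ge0 quad_ge0; rewrite leNgt; apply/negP => b_gt0.
have [c0|c_neq0] := eqVneq c 0.
  by move: (quad_ge0 1 ltr01 (lexx _)); rewrite c0; lra.
have c_gt0 : 0 < c by rewrite lt_def c_neq0.
pose t := Num.min 1 (b / c).
have t_gt0 : 0 < t by rewrite lt_min ltr01 divr_gt0.
have tc_le_b : t * c <= b by rewrite -ler_pdivlMr // ge_min lexx orbT.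
have t_le1 : t <= 1 by rewrite ge_min lexx.
have := quad_ge0 t t_gt0 t_le1.
by rewrite expr2 -mulrA; nra.
Qed.

Lemma le_double_sum (K : numDomainType) (I J : finType) (F : I -> J -> K) i j :
  (forall i j, 0 <= F i j) -> F i j <= \sum_i' \sum_j' F i' j'.
Proof.
move=> F_ge0; rewrite (bigD1 i) //= (bigD1 j) //= -addrA lerDl.
by rewrite addr_ge0 ?sumr_ge0 // => *; rewrite ?sumr_ge0.
Qed.

Lemma continuous_sqr_add (R : realType) (T : topologicalType) (f h : T -> R) :
  continuous f -> continuous h -> continuous (fun t => f t * f t + h t * h t).
Proof.
move=> cont_f cont_h t; have : {for t, continuous (fun t => f t * f t + h t * h t)}.
  by apply: continuousD; apply: continuousM; first [apply: cont_f | apply: cont_h].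
exact.
Qed.

Section NearestSimplePMD.
Variable R : realType.
Local Notation C := R[i].
Variables (n : nat) (X A : finType).
Local Notation Lam := {ffun X -> A}.
Local Notation space := 'rV[R]_#|{: Lam * 'I_n * 'I_n * bool}|.
Local Open Scope classical_set_scope.

Lemma jointmx_affine a (G H : Lam -> 'M[C]_n) x b :
  jointmx (fun l => RtoC a *: G l + H l) x b = RtoC a *: jointmx G x b + jointmx H x b.
Proof. by rewrite /jointmx big_split /= scaler_sumr. Qed.

Lemma jointmx_convex (G H : Lam -> 'M[C]_n) t x b :
  jointmx (fun l => RtoC (1 - t) *: G l + RtoC t *: H l) x b =
  jointmx G x b - RtoC t *: (jointmx G x b - jointmx H x b).
Proof.
rewrite /jointmx big_split /= -!scaler_sumr rmorphB rmorph1 scalerBl scale1r scalerBr.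
by rewrite opprB addrA addrAC.
Qed.

Lemma povm_convex (G H : Lam -> 'M[C]_n) t : 0 <= t <= 1 ->
  is_POVM G -> is_POVM H -> is_POVM (fun l => RtoC (1 - t) *: G l + RtoC t *: H l).
Proof.
move=> /andP[t_ge0 t_le1] [psdG sumG] [psdH sumH]; split=> [l|].
  by apply: psdD; apply: psdZ; rewrite ?RtoC_ge0 ?subr_ge0.
by rewrite big_split /= -!scaler_sumr sumG sumH -scalerDl -rmorphD subrK rmorph1 scale1r.
Qed.

Variable M : X -> A -> 'M[C]_n.

Definition dist_to_simple (g : space) : R :=
  hs_dot (fam_sub M (jointmx (decode g))) (fam_sub M (jointmx (decode g))).

Lemma dist_to_simple_continuous : continuous dist_to_simple.
Proof.
apply: continuous_sum => k.
have lin_entry a (G H : Lam -> 'M[C]_n) :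
    fam_entry (jointmx (fun l => RtoC a *: G l + H l)) k =
    RtoC a * fam_entry (jointmx G) k + fam_entry (jointmx H) k.
  by rewrite /fam_entry jointmx_affine !mxE.
have [contRe contIm] := decode_continuous lin_entry.
have cont_sub (f : space -> R) c : continuous f -> continuous (fun g => c - f g).
  move=> cont_f g; have : {for g, continuous (fun g => c - f g)}.
    by apply: continuousB; [apply: cst_continuous | apply: cont_f].
  exact.
have contRe' :
    continuous (fun g => complex.Re (fam_entry (fam_sub M (jointmx (decode g))) k)).
  rewrite (_ : (fun g => _) = fun g =>
    complex.Re (fam_entry M k) - complex.Re (fam_entry (jointmx (decode g)) k)).
    exact: cont_sub contRe.
  by apply/funext => g; rewrite fam_entryB raddfB.
have contIm' :
    continuous (fun g => complex.Im (fam_entry (fam_sub M (jointmx (decode g))) k)).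
  rewrite (_ : (fun g => _) = fun g =>
    complex.Im (fam_entry M k) - complex.Im (fam_entry (jointmx (decode g)) k)).
    exact: cont_sub contIm.
  by apply/funext => g; rewrite fam_entryB raddfB.
exact: continuous_sqr_add.
Qed.

(* The minimiser Y of the distance to M over the compact convex set of simple
   PMDs satisfies the first-order condition along each segment from Y to F. *)
Lemma nearest_simple_PMD (Y0 : X -> A -> 'M[C]_n) :
  simple_PMD Y0 -> ~ simple_PMD M ->
  exists2 Y, simple_PMD Y &
    0 < hs_dot (fam_sub M Y) (fam_sub M Y) /\
    forall F, simple_PMD F -> hs_dot (fam_sub M Y) (fam_sub F Y) <= 0.
Proof.
move=> /simple_PMD_jointP[G0 povmG0 _] not_simple.
have coords_ne0 : @povm_coords R n X A !=set0.
  by exists (encode G0); rewrite /povm_coords /= encodeK.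
have [gY /set_mem povm_gY gY_min] := compact_EVT_min coords_ne0
  (@compact_povm_coords R n X A) (continuous_subspaceT dist_to_simple_continuous).
set Y := jointmx (decode gY).
have simpleY : simple_PMD Y by apply/simple_PMD_jointP; exists (decode gY).
exists Y => //; split.
  rewrite lt_def hs_dot_ge0 andbT; apply: contra_notN not_simple => /eqP /hs_dot_eq0 MY0.
  suff -> : M = Y by [].
  apply/funext => x; apply/funext => a; apply/eqP; rewrite -subr_eq0.
  by rewrite -[_ - _]/(fam_sub M Y x a) MY0.
move=> F /simple_PMD_jointP[G povmG ->].
apply: (quad_ge0_le0 (hs_dot_ge0 (fam_sub (jointmx G) Y))) => t t_gt0 t_le1.
pose gt := (1 - t) *: gY + t *: encode G.
have decode_gt : decode gt = fun l => RtoC (1 - t) *: decode gY l + RtoC t *: G l.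
  rewrite decode_affine; apply/funext => l.
  by rewrite -[t *: _]addr0 decode_affine encodeK decode0 addr0.
have povm_gt : @povm_coords R n X A gt.
  by rewrite /povm_coords /= decode_gt; apply: povm_convex; rewrite ?(ltW t_gt0).
have := gY_min gt (mem_set povm_gt).
rewrite /dist_to_simple decode_gt.
have -> : fam_sub M (jointmx (fun l => RtoC (1 - t) *: decode gY l + RtoC t *: G l)) =
    fam_sub (fam_sub M Y) (fun x a => RtoC t *: fam_sub (jointmx G) Y x a).
  apply/funext => x; apply/funext => a; rewrite /fam_sub jointmx_convex.
  by rewrite opprB -scalerN opprB addrA addrAC.
rewrite hs_dot_sub_scale; lra.
Qed.

End NearestSimplePMD.

(** * Incompatibility witnesses *)

Section HermitianGame.
Variable R : realType.
Local Notation C := R[i].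
Variables (n : nat) (X A : finType) (D : X -> A -> 'M[C]_n.+1).
Hypothesis hermD : forall x a, adj (D x a) = D x a.

(* rho is D shifted by a multiple of the identity large enough to make it
   positive, then normalised; since sum_a F(a|x) = 1, the shift contributes a
   term that does not depend on F. *)
Lemma hermitian_game (x0 : X) (a0 : A) :
  exists rho, is_game rho /\ exists2 s : C, 0 < s & exists t : C,
    forall F, is_PMD F -> game_value F rho = s * RtoC (hs_dot D F) + t.
Proof.
pose c := \sum_x \sum_a \sum_i \sum_j `|D x a i j|.
have D_le_c x a : \sum_i \sum_j `|D x a i j| <= c.
  by apply: le_double_sum => x' a'; do 2!(apply: sumr_ge0 => ? _).
pose rho0 x a := D x a + (c + 1) *: 1%:M.
have psd_rho0 x a : psd (rho0 x a).
  rewrite /rho0 scalerDl scale1r addrA.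
  by apply: psdD; [apply: psd_hermitian_shift | apply: psd1].
pose Z := \sum_x \sum_a \tr (rho0 x a).
have Z_gt0 : 0 < Z.
  have tr_ge0 x a := psd_mxtrace_ge0 (psd_rho0 x a).
  apply: (lt_le_trans _ (le_double_sum x0 a0 tr_ge0)).
  rewrite /rho0 scalerDl scale1r addrA mxtraceD mxtrace1.
  apply: (lt_le_trans (ltr0Sn _ n)); rewrite lerDr psd_mxtrace_ge0 //.
  exact: psd_hermitian_shift.
exists (fun x a => Z^-1 *: rho0 x a); split.
  split=> [x a|]; first by apply: psdZ; rewrite ?invr_ge0 ?ltW.
  rewrite -(mulVf (lt0r_neq0 Z_gt0)) mulr_sumr; apply: eq_bigr => x _.
  by rewrite mulr_sumr; apply: eq_bigr => a _; rewrite mxtraceZ.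
exists Z^-1; first by rewrite invr_gt0.
exists (Z^-1 * ((c + 1) * \sum_(x : X) (n.+1)%:R)) => F [psdF sumF].
have trFD : \sum_x \sum_a \tr (F x a *m D x a) = RtoC (hs_dot D F).
  rewrite -hs_dot_trace // RtoC_Re //; apply: rpred_sum => x _; apply: rpred_sum => a _.
  exact: mxtrace_mul_hermitian_real (psd_hermitian (psdF x a)) (hermD x a).
transitivity (Z^-1 * \sum_x (\sum_a \tr (F x a *m D x a) + (c + 1) * (n.+1)%:R)).
  rewrite mulr_sumr; apply: eq_bigr => x _.
  rewrite -[(n.+1)%:R]mxtrace1 -(sumF x) raddf_sum /= mulr_sumr -big_split mulr_sumr.
  apply: eq_bigr => a _.
  by rewrite -scalemxAr mxtraceZ mulmxDr mxtraceD -scalemxAr mxtraceZ mulmx1.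
by rewrite big_split /= -mulr_sumr trFD mulrDr.
Qed.
End HermitianGame.

Section Incompatibility.
Variable R : realType.
Local Notation C := R[i].

Lemma incompatible_witness n (X A : finType) (M : X -> A -> 'M[C]_n) :
  is_PMD M -> ~ simple_PMD M ->
  exists rho, is_game rho /\ RtoC (P_guess_simple rho) < game_value M rho.
Proof.
move=> PMD_M not_simple.
case: n M PMD_M not_simple => [|n] M PMD_M not_simple.
  by case: not_simple; apply: simple_PMD_dim0.
have [x0 _|X0] := pickP (@predT X); last first.
  by case: not_simple; apply: simple_PMD_void => x; have := X0 x.
have [a0 _|A0] := pickP (@predT A); last first.
  have := proj2 PMD_M x0; rewrite big_pred0 // => /matrixP /(_ 0 0).
  by rewrite !mxE eqxx => /eqP; rewrite eq_sym oner_eq0.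
have [Y simpleY [MY_gt0 MY_sep]] :=
  nearest_simple_PMD (@simple_PMD_const R n.+1 X A a0) not_simple.
have hermMY x a : adj (fam_sub M Y x a) = fam_sub M Y x a.
  by rewrite adjB !psd_hermitian //; [case: simpleY => -[] | case: PMD_M].
have [rho [game_rho [s s_gt0 [t val_rho]]]] := hermitian_game hermMY x0 a0.
exists rho; split=> //.
have PMD_Y := proj1 simpleY.
have val_Y := game_value_real PMD_Y game_rho.
apply: (le_lt_trans (y := RtoC (complex.Re (game_value Y rho)))).
  rewrite RtoC_le; apply: P_guess_simple_le => [|F simpleF].
    by rewrite -RtoC_ge0 val_Y game_value_ge0.
  rewrite val_Y !val_rho //; last by case: simpleF.
  by rewrite lerD2r ler_pM2l // RtoC_le -subr_le0 -hs_dotBr MY_sep.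
by rewrite val_Y !val_rho // ltrD2r ltr_pM2l // RtoC_lt -subr_gt0 -hs_dotBr.
Qed.

End Incompatibility.

Theorem corollary1 (R : realType) (n : nat) (X A : finType)
  (M : X -> A -> 'M[R[i]]_n) :
  is_PMD M ->
  (incompatible_PMD M <->
   exists rho : X -> A -> 'M[R[i]]_n,
     is_game rho /\
     RtoC (P_guess_simple rho) < \sum_x \sum_a \tr (M x a *m rho x a)).
Proof.
move=> PMD_M; split=> [[_ not_simple]|[rho [game_rho lt_val]]].
  exact: incompatible_witness.
split=> // simpleM.
have := game_value_le_P_guess_simple simpleM game_rho.
by move=> /le_gtF; rewrite /game_value lt_val.
Qed.
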